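(* Let $(\mathcal{A}, \mathcal{B})$ be a stable cross-intersecting pair of families in $\mathcal{I}_{n, k}^r$. For any $A \in \mathcal{A}$ and $B \in \mathcal{B}$, there is some $i \in [n]$ with $(i, 1) \in A \cap B$.
   Context: $\Gamma_{n,k}$ is the disjoint union of $n$ copies of $K_k$, with vertices $(i,j)$, $i\in[n]$, $j\in[k]$; $\mathcal{I}_{n,k}^r$ is the set of its independent sets of size $r$. For $i\in[n]$, $s\in[2,k]$ and $X\in\mathcal{I}_{n,k}^r$, $P_{i,s}(X)=(X\setminus\{(i,s)\})\cup\{(i,1)\}$ if $(i,s)\in X$ and $P_{i,s}(X)=X$ otherwise; $\pi_{i,s}(\mathcal{F})=\{P_{i,s}(X): X\in\mathcal{F}\}\cup\{X\in\mathcal{F}: P_{i,s}(X)\in\mathcal{F}\}$. A family $\mathcal{F}$ is stable if $\pi_{i,s}(\mathcal{F})=\mathcal{F}$ for all $i\in[n]$, $s\in[2,k]$; a pair is stable if both families are. A pair $(\mathcal{A},\mathcal{B})$ of non-empty families is cross-intersecting if $A\cap B\neq\emptyset$ for all $A\in\mathcal{A},B\in\mathcal{B}$. *)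

From mathcomp Require Import all_boot.
Set Implicit Arguments. Unset Strict Implicit. Unset Printing Implicit Defensive.

(* Vertices of Gamma_{n,k}: (i, j) with i : 'I_n (copy), j : 'I_k (0-based;
   paper's j = 1 is val j = 0). *)
Definition vtx (n k : nat) := ('I_n * 'I_k)%type.

(* X is independent in the disjoint union of n copies of K_k:
   no two distinct vertices lie in the same copy. *)
Definition indep n k (X : {set vtx n k}) : bool :=
  [forall x in X, forall y in X, (x.1 == y.1) ==> (x == y)].

Definition Ink n k r : {set {set vtx n k}} :=
  [set X | indep X & #|X| == r].

(* the element of 'I_k with value 0 (paper's "1"), built from any s : 'I_k *)
Definition ord_first k (s : 'I_k) : 'I_k :=
  Ordinal (leq_ltn_trans (leq0n s) (ltn_ord s)).

Definition Pshift n k (i : 'I_n) (s : 'I_k) (X : {set vtx n k}) : {set vtx n k} :=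
  if (i, s) \in X then (X :\ (i, s)) :|: [set (i, ord_first s)] else X.

Definition pishift n k (i : 'I_n) (s : 'I_k) (F : {set {set vtx n k}})
  : {set {set vtx n k}} :=
  [set Pshift i s X | X in F] :|: [set X in F | Pshift i s X \in F].

(* stable: invariant under all pi_{i,s}, s in [2,k] (i.e. val s > 0) *)
Definition stable n k (F : {set {set vtx n k}}) : Prop :=
  forall (i : 'I_n) (s : 'I_k), 0 < val s -> pishift i s F = F.

Definition cross_intersecting n k (A B : {set {set vtx n k}}) : Prop :=
  [/\ A != set0, B != set0 &
      forall X Y, X \in A -> Y \in B -> X :&: Y != set0].

From mathcomp Require Import all_boot.

Set Implicit Arguments.
Unset Strict Implicit.
Unset Printing Implicit Defensive.

(* Fix Y in B and, among the X in A sharing no vertex (i, 1) with Y, take one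
   with |X :&: Y| minimal.  Cross-intersection gives some (i, s) in X :&: Y,
   necessarily with s <> 1.  As Y is independent, (i, 1) is not in Y, so the
   shift P_{i,s} removes exactly (i, s) from X :&: Y, while stability keeps
   P_{i,s}(X) in A: this contradicts minimality. *)

Lemma indepP n k (X : {set vtx n k}) :
  reflect {in X &, forall x y, x.1 = y.1 -> x = y} (indep X).
Proof.
apply: (iffP forall_inP) => [indX x y xX yX /eqP eq1 | indX x xX].
  by move/forall_inP/(_ y yX)/implyP/(_ eq1)/eqP: (indX x xX).
by apply/forall_inP => y yX; apply/implyP => /eqP/(indX x y xX yX)->.
Qed.

Lemma indep_first_notin n k (Y : {set vtx n k}) (i : 'I_n) (s : 'I_k) :
  indep Y -> (i, s) \in Y -> 0 < val s -> (i, ord_first s) \notin Y.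
Proof.
move=> /indepP indY isY s_gt0; apply/negP => /(indY _ _ isY)/(_ erefl)[].
by move=> s_first; move: s_gt0; rewrite s_first.
Qed.

Lemma Pshift_setI_indep n k (X Y : {set vtx n k}) (i : 'I_n) (s : 'I_k) :
  indep Y -> (i, s) \in Y -> 0 < val s ->
  Pshift i s X :&: Y = (X :&: Y) :\ (i, s).
Proof.
move=> indY isY s_gt0; have fY := indep_first_notin indY isY s_gt0.
apply/setP => y; rewrite /Pshift; case: ifP => isX; rewrite !inE.
  have [->|_] := eqVneq y (i, ord_first s); last by rewrite orbF andbA.
  by rewrite (negbTE fY) !andbF.
by case: eqVneq => [->|_]; rewrite ?isX ?andbF.
Qed.

Lemma stable_Pshift n k (F : {set {set vtx n k}}) (i : 'I_n) (s : 'I_k) X :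
  stable F -> 0 < val s -> X \in F -> Pshift i s X \in F.
Proof.
by move=> stF s_gt0 XF; rewrite -(stF i s s_gt0) inE imset_f.
Qed.

Lemma stable_meet_first n k (A : {set {set vtx n k}}) (Y : {set vtx n k}) :
  stable A -> indep Y -> (forall X, X \in A -> X :&: Y != set0) ->
  forall X, X \in A -> exists2 x, x \in X :&: Y & val x.2 = 0.
Proof.
move=> stA indY meetA X; have [m] := ubnP #|X :&: Y|.
elim: m X => // m IH X ltXm XA.
have /set0Pn [[i s] isXY] := meetA X XA.
have [s0|s_gt0] := posnP (val s); first by exists (i, s).
have [_ isY] := setIP isXY.
have shrink := Pshift_setI_indep X indY isY s_gt0.
have [|x] := IH (Pshift i s X) _ (stable_Pshift i stA s_gt0 XA).
  by rewrite shrink (leq_trans (proper_card (properD1 isXY))).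
by rewrite shrink => /setD1P[_ xXY] x0; exists x.
Qed.

Theorem lemma4p2 (n k r : nat) (A B : {set {set vtx n k}}) :
  A \subset Ink n k r -> B \subset Ink n k r ->
  stable A -> stable B -> cross_intersecting A B ->
  forall X Y, X \in A -> Y \in B ->
  exists (i : 'I_n) (j : 'I_k), val j = 0 /\ (i, j) \in X :&: Y.
Proof.
move=> _ sBI stA _ [_ _ meetAB] X Y XA YB.
have indY : indep Y by move: (subsetP sBI Y YB); rewrite inE => /andP[].
have [[i j] ijXY j0] :=
  stable_meet_first stA indY (fun Z ZA => meetAB Z Y ZA YB) XA.
by exists i, j.
Qed.
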